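(* Let $G$ be a finite group with pairwise non-isomorphic irreducible complex representations $V_1,\dots,V_k$ with characters $\chi_1,\dots,\chi_k$. Suppose $Q_1,\dots,Q_m$ are probability distributions on $G$ that are constant on conjugacy classes, and let $Q_i=\sum_{j=1}^k a_j^{i}\chi_j$ be their unique expressions as linear combinations of irreducible characters. For a word $w=w_1w_2\cdots w_N$ with $w_i\in\{1,\dots,m\}$ let $Q^{(w)}:=Q_{w_1}\ast\cdots\ast Q_{w_N}$ and $q^{w}:=\sum_{g\in G}Q^{(w)}(g)e_g\in\mathbb{C}G$. Then for every $G$-homogeneous space $X$ and every $x_0\in X$, \[\|q^{w}\cdot e_{x_0}-\overline{u}_X\|^2_{\rm TV}\leq \frac{1}{4}\sum_{V_j\neq {\rm triv}}m(V_j,\mathbb{C} X)\dim(V_j)\left(\frac{|G|}{\dim(V_j)}\right)^{2N}\left(\prod_{i=1}^N a_j^{w_i}\right)^2.\]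
   Context: Convolution: $(P\ast R)(h)=\sum_{g}P(hg^{-1})R(g)$. $\mathbb{C}G$ is the group algebra with basis $\{e_g\}$. A $G$-homogeneous space is a finite set $X$ with transitive $G$-action; $\mathbb{C}X$ has basis $\{e_x\}$ and is a $\mathbb{C}G$-module via $e_g\cdot e_x:=e_{g(x)}$. $\|h\|_{\rm TV}:=\frac12\sum_x|h(x)|$ for $h=\sum_xh(x)e_x$; $\overline{u}_X:=\frac1{|X|}\sum_xe_x$. $m(V_j,\mathbb{C}X)$ is the multiplicity of $V_j$ in $\mathbb{C}X$; the sum runs over nontrivial irreducibles. *)

From HB Require Import structures.
From mathcomp Require Import all_boot all_order all_algebra all_fingroup all_solvable all_field all_character.
Set Implicit Arguments. Unset Strict Implicit. Unset Printing Implicit Defensive.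
Import Order.TTheory GRing.Theory Num.Theory.
Local Open Scope ring_scope.

Section Defs.
Variables (gT : finGroupType) (G : {group gT}).

Definition convG (P R : gT -> algC) : gT -> algC :=
  fun h => \sum_(g in G) P (h * g^-1)%g * R g.

Definition delta1 : gT -> algC := fun g => (g == 1%g)%:R.

Definition convWord (m : nat) (Q : 'I_m -> 'CF(G)) (w : seq 'I_m) : gT -> algC :=
  foldr (fun i acc => convG (fun g => Q i g) acc) delta1 w.

Variables (T : finType) (to : action G T).

(* The left action g(x) := to x g^-1 associated with the (right) mathcomp action. *)
Definition lact (g : gT) (x : T) : T := to x g^-1%g.

(* Coefficient of e_x in q . e_{x0} = sum_g P(g) e_{g(x0)}. *)
Definition actOn (P : gT -> algC) (x0 : T) : T -> algC :=
  fun x => \sum_(g in G | lact g x0 == x) P g.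

Definition tv_unif (h : T -> algC) : algC :=
  2^-1 * \sum_(x : T) `|h x - (#|T|%:R)^-1|.

Definition perm_mx_of (g : gT) : 'M[algC]_#|T| :=
  \matrix_(i, j) ((to (enum_val i) g == enum_val j)%:R).

Lemma perm_mx_of_repr : mx_repr G perm_mx_of.
Proof.
split.
  apply/matrixP=> i j; rewrite !mxE act1.
  by rewrite (inj_eq enum_val_inj).
move=> g h Gg Gh; apply/matrixP=> i j; rewrite !mxE.
rewrite (bigD1 (enum_rank (to (enum_val i) g))) //= !mxE enum_rankK eqxx mul1r.
rewrite big1 ?addr0; first by rewrite actMin.
by move=> k /negbTE nk; rewrite !mxE -(inj_eq enum_rank_inj) enum_valK eq_sym nk mul0r.
Qed.

Definition perm_repr := MxRepresentation perm_mx_of_repr.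

Definition perm_mult (j : Iirr G) : algC := '[cfRepr perm_repr, 'chi_j].

End Defs.

From HB Require Import structures.
From mathcomp Require Import all_boot all_order all_algebra all_fingroup all_solvable all_field all_character.
From mathcomp Require Import ring.

(* Convolution is diagonal in the irreducible characters: chi_i * chi_j equals
   0 for i <> j and (|G| / chi_i(1)) chi_i for i = j, so Q^(w) = sum_j c_j chi_j
   with c_j = (|G|/d_j)^N (prod_i a_j^(w_i)) d_j/|G|.  The squared l^2-norm of
   mu = q^w . e_x0 is the autocorrelation of Q^(w) summed over the stabiliser of
   x0; Schur orthogonality evaluates it as sum_j |c_j|^2 |G|/d_j times a sum of
   conjugate characters over the stabiliser, which is |G|/|X| m(V_j, CX).  The
   trivial character contributes exactly 1/|X| = ||u_X||_2^2, and the
   Cauchy-Schwarz bound ||h||_1^2 <= |X| ||h||_2^2 converts the resulting l^2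
   identity into the total variation bound. *)

Set Implicit Arguments.
Unset Strict Implicit.
Unset Printing Implicit Defensive.
Import Order.TTheory GRing.Theory Num.Theory.
Local Open Scope ring_scope.

Section MeanSquare.
Variables (C : numClosedFieldType) (I : finType).

Lemma sum_card0 (h : I -> C) : #|I| = 0%N -> \sum_x h x = 0.
Proof. by move=> I0; rewrite big_pred0 // => x; rewrite -[LHS]/(x \in I) card0_eq. Qed.

Lemma sum_sqr_norm_sub_mean (h : I -> C) :
  \sum_x `|h x - (\sum_y h y) / #|I|%:R| ^+ 2
    = \sum_x `|h x| ^+ 2 - `|\sum_x h x| ^+ 2 / #|I|%:R.
Proof.
have [I0 | nI] := eqVneq #|I| 0%N.
  by rewrite !sum_card0 // normr0 expr0n mul0r subr0.
set s := \sum_y h y; set n := #|I|%:R.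
have n0 : n != 0 by rewrite pnatr_eq0.
have nC : n^* = n by rewrite conjC_nat.
under eq_bigr => x _ do
  rewrite normCK rmorphB /= rmorphM /= fmorphV /= nC mulrBl !mulrBr.
under [X in _ = X - _]eq_bigr => x _ do rewrite normCK.
rewrite !sumrB -!mulr_suml -!mulr_sumr -rmorph_sum sumr_const -/s normCK.
by rewrite -[#|_|]/#|I| -mulr_natr -/n; field.
Qed.

Lemma sqr_norm_sum_le (h : I -> C) :
  `|\sum_x h x| ^+ 2 <= #|I|%:R * \sum_x `|h x| ^+ 2.
Proof.
have [I0 | nI] := eqVneq #|I| 0%N.
  by rewrite sum_card0 // normr0 expr0n /= I0 mul0r.
have n0 : 0 < #|I|%:R :> C by rewrite ltr0n lt0n.
rewrite mulrC -ler_pdivrMr // -subr_ge0 -sum_sqr_norm_sub_mean.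
by apply: sumr_ge0 => x _; rewrite exprn_ge0.
Qed.

End MeanSquare.

Section Convolution.
Variables (gT : finGroupType) (G : {group gT}).

Lemma cfun_mulgC (phi : 'CF(G)) x y : x \in G -> phi (x * y)%g = phi (y * x)%g.
Proof. by move=> Gx; rewrite -(cfunJ phi (x * y)%g Gx) conjgE mulgA mulKg. Qed.

Lemma sum_invg (F : gT -> algC) : \sum_(g in G) F g = \sum_(g in G) F g^-1%g.
Proof. by rewrite (reindex_inj invg_inj) /=; apply: eq_bigl => g; rewrite groupV. Qed.

Lemma convG_irr i j :
  convG G 'chi_i 'chi_j =1 ((i == j)%:R * (#|G|%:R / 'chi_i 1%g)) *: 'chi[G]_i.
Proof.
move=> h; rewrite /convG sum_invg cfunE.
under eq_bigr => g Gg do rewrite invgK -cfun_mulgC //.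
move/(canRL (mulVKf (neq0CG G))): (generalized_orthogonality_relation h i j) ->.
by ring.
Qed.

Lemma convG_irr_sum (c b : Iirr G -> algC) :
  convG G (\sum_k c k *: 'chi_k) (\sum_k b k *: 'chi_k)
    =1 \sum_k (c k * b k * (#|G|%:R / 'chi_k 1%g)) *: 'chi[G]_k.
Proof.
move=> h; rewrite sum_cfunE.
transitivity (\sum_k \sum_l c k * b l * convG G 'chi_k 'chi_l h).
  rewrite /convG; under eq_bigr => g _ do rewrite !sum_cfunE mulr_suml.
  rewrite exchange_big; apply: eq_bigr => k _.
  under eq_bigr => g _ do rewrite mulr_sumr.
  rewrite exchange_big; apply: eq_bigr => l _.
  rewrite mulr_sumr; apply: eq_bigr => g _; rewrite !cfunE; ring.
apply: eq_bigr => k _; rewrite (bigD1 k) //= big1 => [|l nlk]; last first.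
  by rewrite convG_irr cfunE eq_sym (negbTE nlk) !mul0r mulr0.
by rewrite addr0 convG_irr !cfunE eqxx mul1r mulrA.
Qed.

Lemma eq_convG (P1 P2 R1 R2 : gT -> algC) :
  P1 =1 P2 -> R1 =1 R2 -> convG G P1 R1 =1 convG G P2 R2.
Proof. by move=> eqP eqR h; apply: eq_bigr => g _; rewrite eqP eqR. Qed.

Lemma delta1_irr : @delta1 gT =1 \sum_j ('chi_j 1%g / #|G|%:R) *: 'chi[G]_j.
Proof.
move=> g; apply: (mulfI (neq0CG G)); rewrite sum_cfunE mulr_sumr.
have := congr1 (fun phi : 'CF(G) => phi g) (cfReg_sum G).
rewrite cfRegE sum_cfunE /delta1 mulr_natr => ->.
by apply: eq_bigr => j _; rewrite !cfunE; field; apply: neq0CG.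
Qed.

Lemma sum_convG (P R : gT -> algC) :
  \sum_(h in G) convG G P R h = (\sum_(g in G) P g) * \sum_(g in G) R g.
Proof.
rewrite exchange_big mulr_sumr; apply: eq_bigr => g Gg.
rewrite -mulr_suml; congr (_ * _).
rewrite (reindex_inj (mulIg g)) /=; apply: eq_big => h; first by rewrite groupMr.
by rewrite mulgK.
Qed.

Lemma sum_delta1 : \sum_(g in G) delta1 g = 1.
Proof.
rewrite (bigD1 1%g) //= big1 => [|g /andP[_ /negbTE ng1]]; last by rewrite /delta1 ng1.
by rewrite addr0 /delta1 eqxx.
Qed.

Lemma sum_irr_expansion (p : Iirr G -> algC) :
  \sum_(g in G) (\sum_j p j *: 'chi[G]_j) g = #|G|%:R * p 0.
Proof.
have : '[\sum_j p j *: 'chi_j, 'chi[G]_0] = p 0.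
  rewrite cfdot_suml (bigD1 0) //= big1 => [|j nj0]; last first.
    by rewrite cfdotZl cfdot_irr (negbTE nj0) mulr0.
  by rewrite cfdotZl cfdot_irr eqxx mulr1 addr0.
rewrite cfdotE => <-; rewrite mulVKf ?neq0CG //; apply: eq_bigr => g Gg.
by rewrite irr0 cfun1E Gg conjC1 mulr1.
Qed.

Lemma sum_irr_mul_conj_irrM j l k : k \in G ->
  \sum_(g in G) 'chi[G]_j g * ('chi_l (g * k)%g)^*
    = (j == l)%:R * (#|G|%:R / 'chi_j 1%g) * ('chi_j k)^*.
Proof.
move=> Gk; rewrite sum_invg.
rewrite (eq_bigr (fun x => 'chi_l (x * k^-1)%g * 'chi_j x^-1%g)) => [|x Gx]; last first.
  by rewrite -irr_inv invMg invgK (cfun_mulgC _ _ Gx) mulrC.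
apply: (mulfI (invr_neq0 (neq0CG G))); rewrite generalized_orthogonality_relation irr_inv.
rewrite eq_sym; have [<- | _] := eqVneq j l; last by rewrite !mul0r mulr0.
by field; rewrite irr1_neq0 neq0CG.
Qed.

Lemma autocorrelation_irr (p : Iirr G -> algC) k : k \in G ->
  \sum_(g in G) (\sum_j p j *: 'chi[G]_j) g * ((\sum_j p j *: 'chi_j) (g * k)%g)^*
    = \sum_j `|p j| ^+ 2 * (#|G|%:R / 'chi_j 1%g) * ('chi_j k)^*.
Proof.
move=> Gk.
transitivity (\sum_j \sum_l p j * (p l)^* *
                \sum_(g in G) 'chi[G]_j g * ('chi_l (g * k)%g)^*).
  under eq_bigr => g _ do rewrite !sum_cfunE rmorph_sum mulr_suml.
  under eq_bigr => g _ do under eq_bigr => j _ do rewrite mulr_sumr.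
  rewrite exchange_big; apply: eq_bigr => j _.
  rewrite exchange_big; apply: eq_bigr => l _.
  by rewrite mulr_sumr; apply: eq_bigr => g _; rewrite !cfunE rmorphM; ring.
apply: eq_bigr => j _; rewrite (bigD1 j) //= sum_irr_mul_conj_irrM // eqxx mul1r.
rewrite big1 => [|l nlj]; last first.
  by rewrite sum_irr_mul_conj_irrM // eq_sym (negbTE nlj) !mul0r mulr0.
by rewrite addr0 normCK !mulrA.
Qed.

Section Words.
Variables (m : nat) (Q : 'I_m -> 'CF(G)) (a : 'I_m -> Iirr G -> algC).

Definition word_coef (w : seq 'I_m) (j : Iirr G) : algC :=
  (#|G|%:R / 'chi_j 1%g) ^+ size w * \prod_(i <- w) a i j * ('chi_j 1%g / #|G|%:R).

Lemma convWord_irr (w : seq 'I_m) :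
  (forall i, Q i = \sum_j a i j *: 'chi_j) ->
  convWord Q w =1 \sum_j word_coef w j *: 'chi[G]_j.
Proof.
move=> Ha; elim: w => [|i w IH] h /=.
  rewrite delta1_irr !sum_cfunE; apply: eq_bigr => j _.
  by rewrite /word_coef big_nil expr0 !mul1r.
rewrite Ha (eq_convG (frefl _) IH) convG_irr_sum !sum_cfunE.
by apply: eq_bigr => j _; rewrite !cfunE /word_coef big_cons exprS; ring.
Qed.

Lemma sum_convWord (w : seq 'I_m) :
  (forall i, \sum_(g in G) Q i g = 1) -> \sum_(g in G) convWord Q w g = 1.
Proof.
move=> HQ; elim: w => [|i w IH] /=; first exact: sum_delta1.
by rewrite sum_convG HQ IH mulr1.
Qed.

Lemma norm_word_coef (w : seq 'I_m) j :
  `|word_coef w j| ^+ 2 * (#|G|%:R ^+ 2 / 'chi_j 1%g)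
    = 'chi_j 1%g * (#|G|%:R / 'chi_j 1%g) ^+ (2 * size w)
      * `|\prod_(i <- w) a i j| ^+ 2.
Proof.
have d_gt0 := irr1_gt0 j.
have Gd_ge0 : 0 <= #|G|%:R / 'chi_j 1%g by rewrite divr_ge0 ?ler0n ?ltW.
rewrite /word_coef !normrM normrX (ger0_norm Gd_ge0) (gtr0_norm d_gt0) normfV normr_nat.
by rewrite mulnC exprM; field; rewrite neq0CG gt_eqF.
Qed.

End Words.

End Convolution.

Section Action.
Variables (gT : finGroupType) (G : {group gT}) (T : finType) (to : action G T).

Lemma mem_astab1 x k : (k \in 'C[x | to]%g) = (k \in G) && (to x k == x).
Proof. by rewrite !inE sub1set inE. Qed.

Section BasePoint.
Variable x0 : T.

Lemma eq_lact g h : g \in G -> h \in G ->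
  (lact to h x0 == lact to g x0) = (g^-1 * h \in 'C[x0 | to])%g.
Proof.
move=> Gg Gh; rewrite /lact -(inj_eq (act_inj to h)) actKVin //.
by rewrite -actMin ?groupV // eq_sym mem_astab1 groupM ?groupV.
Qed.

Lemma sum_lact_fiber (F : gT -> algC) g : g \in G ->
  \sum_(h in G | lact to h x0 == lact to g x0) F h
    = \sum_(k in 'C[x0 | to]%g) F (g * k)%g.
Proof.
move=> Gg; rewrite (reindex_inj (mulgI g)) /=; apply: eq_bigl => k.
rewrite groupMl //; have [Gk | nGk] := boolP (k \in G).
  by rewrite (eq_lact Gg (groupM Gg Gk)) mulKg.
by apply/esym/negbTE; apply: contra nGk; apply: astab_dom.
Qed.

Lemma sum_actOn (P : gT -> algC) : \sum_x actOn to P x0 x = \sum_(g in G) P g.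
Proof. by rewrite [RHS](partition_big (fun g => lact to g x0) predT). Qed.

Lemma sum_sqr_norm_actOn (P : gT -> algC) :
  \sum_x `|actOn to P x0 x| ^+ 2
    = \sum_(k in 'C[x0 | to]%g) \sum_(g in G) P g * (P (g * k)%g)^*.
Proof.
under eq_bigr => x _ do rewrite normCK {1}/actOn mulr_suml.
rewrite [RHS]exchange_big /= (eq_bigr (fun x => \sum_(g in G | lact to g x0 == x)
  P g * (actOn to P x0 (lact to g x0))^*)) => [|x _]; last first.
  by apply: eq_bigr => g /andP[_ /eqP ->].
rewrite -(partition_big (fun g => lact to g x0) predT) //=; apply: eq_bigr => g Gg.
by rewrite /actOn rmorph_sum sum_lact_fiber // mulr_sumr.
Qed.

Hypothesis Htr : [transitive G, on [set: T] | to].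

Lemma sum_astab1_transitive (phi : 'CF(G)) x :
  \sum_(k in 'C[x | to]%g) phi k = \sum_(k in 'C[x0 | to]%g) phi k.
Proof.
have [t Gt ->] := atransP2in (subxx G) Htr (in_setT x0) (in_setT x).
rewrite astab1_act_in // (reindex_inj (conjg_inj t)) /=.
by apply: eq_big => k; [rewrite memJ_conjg | rewrite cfunJ].
Qed.

Lemma cfRepr_perm_repr g : g \in G ->
  cfRepr (perm_repr to) g = \sum_x (to x g == x)%:R.
Proof.
move=> Gg; rewrite cfunE Gg mulr1n /mxtrace.
rewrite [RHS](reindex _ (onW_bij _ (@enum_val_bij T))) /=.
by apply: eq_bigr => i _; rewrite mxE.
Qed.

Lemma perm_mult_astab1 j :
  perm_mult to j = #|T|%:R / #|G|%:R * \sum_(k in 'C[x0 | to]%g) ('chi[G]_j k)^*.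
Proof.
rewrite /perm_mult cfdotE mulrC [RHS]mulrAC; congr (_ * _).
under eq_bigr => g Gg do rewrite cfRepr_perm_repr // mulr_suml.
rewrite exchange_big /= (eq_bigr (fun x => \sum_(k in 'C[x0 | to]%g) ('chi_j k)^*)).
  by rewrite sumr_const mulr_natl.
move=> x _; under eq_bigr => g _ do rewrite mulr_natl mulrb.
rewrite -big_mkcondr /= (eq_bigl _ _ (fun g => esym (mem_astab1 x g))).
under eq_bigr => k _ do rewrite -cfConjCE.
by rewrite sum_astab1_transitive; apply: eq_bigr => k _; rewrite cfConjCE.
Qed.

Lemma perm_mult0 : perm_mult to 0 = 1.
Proof.
have orbit_stab : #|T|%:R * #|'C[x0 | to]%g|%:R = #|G|%:R :> algC.
  rewrite -natrM -(card_orbit_in_stab to x0 (subxx G)) (setIidPr (subsetIl _ _)).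
  by rewrite (atransPin (subxx G) Htr (in_setT x0)) cardsT.
rewrite perm_mult_astab1.
under eq_bigr => k Sk do rewrite irr0 cfun1E (astab_dom Sk) conjC1.
by rewrite sumr_const -mulr_natr mul1r mulrAC orbit_stab divff ?neq0CG.
Qed.

Lemma plancherel_actOn (P : gT -> algC) (p : Iirr G -> algC) :
    P =1 \sum_j p j *: 'chi[G]_j ->
  #|T|%:R * \sum_x `|actOn to P x0 x| ^+ 2
    = \sum_j `|p j| ^+ 2 * (#|G|%:R ^+ 2 / 'chi_j 1%g) * perm_mult to j.
Proof.
move=> HP; rewrite sum_sqr_norm_actOn (eq_bigr (fun k =>
  \sum_j `|p j| ^+ 2 * (#|G|%:R / 'chi_j 1%g) * ('chi_j k)^*)) => [|k Sk]; last first.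
  by rewrite -autocorrelation_irr ?(astab_dom Sk) //; apply: eq_bigr => g _; rewrite !HP.
rewrite exchange_big mulr_sumr; apply: eq_bigr => j _.
by rewrite perm_mult_astab1 -mulr_sumr; field; rewrite irr1_neq0 neq0CG.
Qed.

Lemma plancherel_actOn_uniform (P : gT -> algC) (p : Iirr G -> algC) :
    P =1 \sum_j p j *: 'chi[G]_j -> \sum_(g in G) P g = 1 ->
  #|T|%:R * \sum_x `|actOn to P x0 x - #|T|%:R^-1| ^+ 2
    = \sum_(j | j != 0) `|p j| ^+ 2 * (#|G|%:R ^+ 2 / 'chi_j 1%g) * perm_mult to j.
Proof.
move=> HP sumP; have nT : #|T|%:R != 0 :> algC.
  by rewrite pnatr_eq0 -lt0n; apply/card_gt0P; exists x0.
have p0 : p 0 = #|G|%:R^-1.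
  apply: (mulfI (neq0CG G)); rewrite -sum_irr_expansion divff ?neq0CG // -sumP.
  by apply: eq_bigr => g _; rewrite HP.
have := sum_sqr_norm_sub_mean (actOn to P x0); rewrite sum_actOn sumP div1r => ->.
rewrite normr1 expr1n div1r mulrBr mulfV // (plancherel_actOn HP) (bigD1 0) //=.
rewrite p0 perm_mult0 irr0 cfun1E group1 divr1 mulr1 normfV normr_nat exprVn.
by rewrite mulVf ?expf_neq0 ?neq0CG // [1 + _]addrC addrK.
Qed.

End BasePoint.
End Action.

Theorem corollary1p5 (gT : finGroupType) (G : {group gT}) (m : nat)
    (Q : 'I_m -> 'CF(G)) (a : 'I_m -> Iirr G -> algC)
    (HQpos : forall i g, g \in G -> 0 <= Q i g)
    (HQsum : forall i, \sum_(g in G) Q i g = 1)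
    (Ha : forall i, Q i = \sum_(j : Iirr G) a i j *: 'chi_j)
    (w : seq 'I_m)
    (T : finType) (to : action G T)
    (Htr : [transitive G, on [set: T] | to]) (x0 : T) :
  tv_unif (actOn to (convWord Q w) x0) ^+ 2
  <= 4^-1 * \sum_(j : Iirr G | j != 0)
        perm_mult to j * 'chi_j 1%g
        * ((#|G|%:R / 'chi_j 1%g) ^+ (2 * size w))
        * `|\prod_(i <- w) a i j| ^+ 2.
Proof.
(* The bound only uses that each Q i has total mass 1, not that it is nonnegative. *)
rewrite /tv_unif exprMn exprVn -natrX ler_wpM2l ?invr_ge0 ?ler0n //.
rewrite -[X in X ^+ 2 <= _]ger0_norm ?sumr_ge0 //.
apply: le_trans (sqr_norm_sum_le _) _; under eq_bigr => x _ do rewrite normr_id.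
rewrite (plancherel_actOn_uniform x0 Htr (convWord_irr w Ha) (sum_convWord w HQsum)).
under eq_bigr => j _ do rewrite norm_word_coef mulrC !(mulrA (perm_mult to j)).
exact: lexx.
Qed.
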